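(* Let $M>0$ be a real number (the file size), let $k\ge 1$ be an integer, let $\tau\ge 1$ be a real number and let $d_1,d_2$ be nonnegative integers. Let $L=[L[0],L[1],\dots,L[k-1]]$ be a list of positive real numbers in nondecreasing order, $L[0]\le L[1]\le\cdots\le L[k-1]$. For $i=0,\dots,k-1$ define $$g(i)=\sum_{j=0}^{i-1}L[j] \quad(\text{so } g(0)=0),\qquad f(i)=\frac{M}{L[i](k-i)+g(i)} .$$ For $\beta_e>0$, let the threshold function $\alpha^*(d_1,d_2,\beta_e)$ be the minimum $\alpha\ge 0$ such that the mincut condition $$\sum_{i=0}^{k-1}\min\{L[i]\beta_e,\ \alpha\}\ \ge\ M$$ holds, considered subject to the constraint $\gamma^1=(d_1\tau+d_2)\beta_e\ge\alpha$. Then, for $\beta_e\ge f(k-1)$, $$\alpha^*(d_1,d_2,\beta_e)=\begin{cases}\dfrac{M}{k}, & \beta_e\in[f(0),+\infty),\\[2mm] \dfrac{M-g(i)\beta_e}{k-i}, & \beta_e\in[f(i),f(i-1)),\quad i=1,\dots,k-1,\end{cases}$$ where an interval $[f(i),f(i-1))$ with $f(i)=f(i-1)$ is understood to be empty.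
   Context: Setting: a regenerating-code distributed storage system with storage nodes placed in two racks. A file of size $M$ is stored so that each node holds $\alpha$ data units and any $k$ nodes suffice to recover the file. When a node fails, a newcomer node downloads data from $d=d_1+d_2$ helper nodes: $d_1$ helpers in the first rack and $d_2$ in the second; a helper in the same rack as the newcomer sends $\beta_c=\tau\beta_e$ data units and a helper in the other rack sends $\beta_e$ data units ($\tau\ge1$). The repair bandwidth of a newcomer in the first rack is $\gamma^1=(d_1\tau+d_2)\beta_e$. In the information flow graph, the income of a newcomer is the total weight of the arcs entering it (from its helpers); the file is recoverable iff the minimum over data collectors of the $S$–$DC$ mincut, which equals $\sum_{i}\min\{\text{income}_i,\alpha\}$ over the $k$ newcomers minimizing it, is at least $M$. The list $L$ is the nondecreasing ordering of these $k$ incomes divided by $\beta_e$. The threshold function is the minimal $\alpha$ satisfying the mincut condition. *)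

From mathcomp Require Import all_boot all_order all_algebra.
Set Implicit Arguments. Unset Strict Implicit. Unset Printing Implicit Defensive.
Import Order.TTheory GRing.Theory Num.Theory.
Local Open Scope ring_scope.

(* The list L = [L[0]; ...; L[k-1]] is represented as a function nat -> R,
   only its values at indices 0..k-1 matter. *)

Definition gsum (R : realFieldType) (L : nat -> R) (i : nat) : R :=
  \sum_(j < i) L j.

Definition fthr (R : realFieldType) (M : R) (k : nat) (L : nat -> R) (i : nat) : R :=
  M / (L i * (k - i)%:R + gsum L i).

Definition mincut_ok (R : realFieldType) (M : R) (k : nat) (L : nat -> R)
  (be alpha : R) : Prop :=
  M <= \sum_(i < k) Num.min (L i * be) alpha.

Definition feasible_alpha (R : realFieldType) (M : R) (k : nat) (tau : R)
  (d1 d2 : nat) (L : nat -> R) (be alpha : R) : Prop :=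
  [/\ 0 <= alpha, alpha <= (d1%:R * tau + d2%:R) * be & mincut_ok M k L be alpha].

Definition is_threshold (R : realFieldType) (M : R) (k : nat) (tau : R)
  (d1 d2 : nat) (L : nat -> R) (be alpha : R) : Prop :=
  feasible_alpha M k tau d1 d2 L be alpha /\
  (forall b, feasible_alpha M k tau d1 d2 L be b -> alpha <= b).

(* Splitting the indices at i, the mincut sum  \sum_j min(L[j] be, b)  is
   bounded by  g(i) be + (k - i) b, with equality when
   L[j] be <= b for j < i and b <= L[j] be for j >= i.  The value
   alpha_i = (M - g(i) be) / (k - i) makes this bound equal to M, so it is the
   least b satisfying the mincut condition as soon as it lies between
   L[i-1] be and L[i] be; the interval conditions f(i) <= be < f(i-1) are
   exactly these two inequalities.  The gamma constraint costs nothing, since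
   any admissible alpha bounds alpha_i from above. *)

From mathcomp Require Import all_boot all_order all_algebra.
From mathcomp Require Import lra zify.
Import Order.TTheory GRing.Theory Num.Theory.
Local Open Scope ring_scope.

Section MinSums.

Context {R : realFieldType}.
Implicit Types (x : nat -> R) (b : R).

Lemma sum_min_split_nat x b {i k : nat} : (i <= k)%N ->
  \sum_(j < k) Num.min (x j) b =
  \sum_(j < i) Num.min (x j) b + \sum_(i <= j < k) Num.min (x j) b.
Proof.
move=> ik; rewrite -!(big_mkord (fun _ => true) (fun j => Num.min (x j) b)).
by rewrite -(big_cat_nat (leq0n i) ik).
Qed.

Lemma sum_min_le_split x b {i k : nat} : (i <= k)%N ->
  \sum_(j < k) Num.min (x j) b <= \sum_(j < i) x j + (k - i)%:R * b.
Proof.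
move=> ik; rewrite (sum_min_split_nat x b ik) lerD //.
  by apply: ler_sum => j _; rewrite ge_min lexx.
rewrite mulr_natl -sumr_const_nat; apply: ler_sum_nat => j _.
by rewrite ge_min lexx orbT.
Qed.

Lemma sum_min_eq_split x b {i k : nat} : (i <= k)%N ->
  (forall j, (j < i)%N -> x j <= b) ->
  (forall j, (i <= j < k)%N -> b <= x j) ->
  \sum_(j < k) Num.min (x j) b = \sum_(j < i) x j + (k - i)%:R * b.
Proof.
move=> ik below above.
rewrite (sum_min_split_nat x b ik) mulr_natl -sumr_const_nat; congr (_ + _).
  by apply: eq_bigr => j _; apply/min_idPl/below.
by apply: eq_big_nat => j /above /min_idPr.
Qed.

Lemma sum_min_le_mul x b (k : nat) : \sum_(j < k) Num.min (x j) b <= k%:R * b.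
Proof.
by have := sum_min_le_split x b (leq0n k); rewrite big_ord0 add0r subn0.
Qed.

End MinSums.

Definition alpha_at {R : realFieldType} (M : R) (k : nat) (L : nat -> R)
  (be : R) (i : nat) : R := (M - gsum L i * be) / (k - i)%:R.

Section Threshold.

Context {R : realFieldType} {M : R} {k : nat} {L : nat -> R} {be : R}.
Local Notation alpha := (alpha_at M k L be).

Lemma gsum_mulr (i : nat) : gsum L i * be = \sum_(j < i) L j * be.
Proof. by rewrite /gsum mulr_suml. Qed.

Lemma gsumS (i : nat) : gsum L i.+1 = gsum L i + L i.
Proof. by rewrite /gsum big_ord_recr. Qed.

Lemma alpha_at0 : alpha 0 = M / k%:R.
Proof. by rewrite /alpha_at /gsum big_ord0 mul0r subr0 subn0. Qed.

Lemma mincut_ok_gt0 {b : R} : 0 < M -> mincut_ok M k L be b -> 0 < b.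
Proof.
move=> M0 cut; have kb : 0 < k%:R * b.
  exact: lt_le_trans M0 (le_trans cut (sum_min_le_mul (fun j => L j * be) _ _)).
by case: k {cut} kb => [|n]; rewrite ?mul0r ?ltxx // pmulr_rgt0.
Qed.

Lemma alpha_at_le_of_mincut_ok {i : nat} {b : R} : (i < k)%N ->
  mincut_ok M k L be b -> alpha i <= b.
Proof.
move=> ik cut; have ki : 0 < (k - i)%:R :> R by rewrite ltr0n subn_gt0.
have := le_trans cut (sum_min_le_split (fun j => L j * be) b (ltnW ik)).
by rewrite /alpha_at ler_pdivrMr // -gsum_mulr mulrC; lra.
Qed.

Lemma mincut_ok_alpha_at {i : nat} : (i < k)%N ->
  (forall j, (j < i)%N -> L j * be <= alpha i) ->
  (forall j, (i <= j < k)%N -> alpha i <= L j * be) ->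
  mincut_ok M k L be (alpha i).
Proof.
move=> ik below above.
have ki : (k - i)%:R != 0 :> R by rewrite pnatr_eq0 subn_eq0 -ltnNge.
have := sum_min_eq_split (fun j => L j * be) (alpha i) (ltnW ik) below above.
rewrite /mincut_ok => ->.
by rewrite -gsum_mulr /alpha_at [_%:R * _]mulrC divfK // subrKC.
Qed.

Lemma is_threshold_alpha_at {tau : R} {d1 d2 i : nat} :
  0 < M -> (i < k)%N ->
  (forall j, (j < i)%N -> L j * be <= alpha i) ->
  (forall j, (i <= j < k)%N -> alpha i <= L j * be) ->
  (exists a, feasible_alpha M k tau d1 d2 L be a) ->
  is_threshold M k tau d1 d2 L be (alpha i).
Proof.
move=> M0 ik below above [a [_ a_gamma a_cut]].
have cut := mincut_ok_alpha_at ik below above.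
split; last by move=> b [_ _ /(alpha_at_le_of_mincut_ok ik)].
split=> //; first exact/ltW/(mincut_ok_gt0 M0 cut).
exact: le_trans (alpha_at_le_of_mincut_ok ik a_cut) a_gamma.
Qed.

Hypothesis L_gt0 : forall i, (i < k)%N -> 0 < L i.

Lemma gsum_ge0 {i : nat} : (i <= k)%N -> 0 <= gsum L i.
Proof.
by move=> ik; apply: sumr_ge0 => j _; exact/ltW/L_gt0/(leq_trans _ ik).
Qed.

Lemma fthr_denom_gt0 {i : nat} : (i < k)%N -> 0 < L i * (k - i)%:R + gsum L i.
Proof.
move=> ik; apply: ltr_wpDr (gsum_ge0 (ltnW ik)) _.
by rewrite mulr_gt0 ?L_gt0 // ltr0n subn_gt0.
Qed.

Lemma alpha_at_le_of_fthr_le {i : nat} : (i < k)%N ->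
  fthr M k L i <= be -> alpha i <= L i * be.
Proof.
move=> ik; have ki : 0 < (k - i)%:R :> R by rewrite ltr0n subn_gt0.
rewrite /fthr /alpha_at ler_pdivrMr ?fthr_denom_gt0 // ler_pdivrMr //; lra.
Qed.

Lemma alpha_at_gt_of_lt_fthr {i : nat} : (i.+1 < k)%N ->
  be < fthr M k L i -> L i * be < alpha i.+1.
Proof.
move=> ik; have ki : 0 < (k - i.+1)%:R :> R by rewrite ltr0n subn_gt0.
have kiS : (k - i)%:R = (k - i.+1)%:R + 1 :> R.
  by rewrite natr1; congr _%:R; lia.
rewrite /fthr /alpha_at ltr_pdivlMr ?fthr_denom_gt0 ?(ltnW ik) //.
by rewrite ltr_pdivlMr // gsumS kiS; lra.
Qed.

End Threshold.

Theorem theorem1 (R : realFieldType) (M : R) (k : nat) (tau : R) (d1 d2 : nat)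
  (L : nat -> R) (be : R) :
  0 < M -> (1 <= k)%N -> 1 <= tau ->
  (forall i, (i < k)%N -> 0 < L i) ->
  (forall i j, (i <= j)%N -> (j < k)%N -> L i <= L j) ->
  0 < be ->
  fthr M k L k.-1 <= be ->
  (exists a, feasible_alpha M k tau d1 d2 L be a) ->
  (fthr M k L 0 <= be -> is_threshold M k tau d1 d2 L be (M / k%:R)) /\
  (forall i, (1 <= i)%N -> (i < k)%N ->
     fthr M k L i <= be -> be < fthr M k L i.-1 ->
     is_threshold M k tau d1 d2 L be ((M - gsum L i * be) / (k - i)%:R)).
Proof.
move=> M0 k_gt0 _ L_gt0 L_mono be0 _ feasible.
have above i : (i < k)%N -> fthr M k L i <= be ->
    forall j, (i <= j < k)%N -> alpha_at M k L be i <= L j * be.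
  move=> ik /(alpha_at_le_of_fthr_le L_gt0 ik) le_i j /andP[ij jk].
  by apply: le_trans le_i _; rewrite ler_pM2r // L_mono.
split=> [f0_le | [//|i] _ ik fi_le fi_gt].
  rewrite -(@alpha_at0 _ M k L be).
  by apply: is_threshold_alpha_at (above _ k_gt0 f0_le) feasible.
apply: is_threshold_alpha_at (above _ ik fi_le) feasible => // j ji.
have gt_i := alpha_at_gt_of_lt_fthr L_gt0 ik fi_gt.
by apply: le_trans (ltW gt_i); rewrite ler_pM2r // L_mono // ltnW.
Qed.
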